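(* Let $m\ge 1$ and let $\{S_n\}$ be a $\bmod m$ random walk on $\mathbb{Z}$ with parameters $\mathbf{p}=(p_0,\dots,p_{m-1})$, $\mathbf{q}=(q_0,\dots,q_{m-1})$ satisfying $p_iq_i\neq 0$ for $i=0,1,\dots,m-1$. Let $p^\ast_m$ be the probability that the walk started at $S_0=0$ reaches $m$ before it reaches $-m$. Then \[ p^\ast_m=\frac{p_0p_1\cdots p_{m-1}}{p_0p_1\cdots p_{m-1}+q_0q_1\cdots q_{m-1}}=\frac{\rho_m}{1+\rho_m},\qquad \rho_m:=\frac{p_0p_1\cdots p_{m-1}}{q_0q_1\cdots q_{m-1}} . \]
   Context: A random walk on $\mathbb{Z}$ here is a time-homogeneous Markov chain $\{S_n\}$ on $\mathbb{Z}$ with $S_{n+1}-S_n\in\{-1,0,1\}$ a.s., with $p_j=P(S_{n+1}-S_n=1\mid S_n=j)$, $q_j=P(S_{n+1}-S_n=-1\mid S_n=j)$, $r_j=1-p_j-q_j$. It is a $\bmod m$ random walk (denoted $G(m,\mathbf{p},\mathbf{q})$) if $p_j=p_{j+m}$, $q_j=q_{j+m}$ for all $j\in\mathbb{Z}$. The quantity $p^\ast_m$ is the constant up-step probability of the embedded simple random walk of $\{S_n\}$ on the lattice $m\mathbb{Z}$. *)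

From HB Require Import structures.
From mathcomp Require Import all_boot all_order all_algebra.
From mathcomp Require Import all_classical all_reals all_analysis.
Set Implicit Arguments. Unset Strict Implicit. Unset Printing Implicit Defensive.
Import Order.TTheory GRing.Theory Num.Theory.
Local Open Scope ring_scope.

Definition step (i : 'I_3) : int := (i%:Z - 1)%R.

Definition walk_pos (n : nat) (s : {ffun 'I_n -> 'I_3}) (k : nat) : int :=
  \sum_(l < n | (l < k)%N) step (s l).

(* Transition probability of the mod m walk: at state x, with
   j = x mod m in {0..m-1}, go up with p j, down with q j, stay with
   r j = 1 - p j - q j. *)
Definition trans (R : comNzRingType) (m : nat) (p q : nat -> R) (x : int) (i : 'I_3) : R :=
  let j := absz (x %% m%:Z)%Z in
  if val i == 0%N then q j else if val i == 1%N then 1 - p j - q j else p j.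

Definition path_weight (R : comNzRingType) (m : nat) (p q : nat -> R) (n : nat)
  (s : {ffun 'I_n -> 'I_3}) : R :=
  \prod_(k < n) @trans R m p q (walk_pos s k) (s k).

Definition first_hit_up (m n : nat) (s : {ffun 'I_n -> 'I_3}) : bool :=
  [forall k : 'I_n, `|walk_pos s k| < m%:Z] && (walk_pos s n == m%:Z).

Definition hit_up_at (R : comNzRingType) (m : nat) (p q : nat -> R) (n : nat) : R :=
  \sum_(s : {ffun 'I_n -> 'I_3} | @first_hit_up m n s) @path_weight R m p q n s.

(* Let tau be the exit time of the walk from the strip (-m, m). With the scale
   function s(k) = sum_(i < k) prod_(1 <= j <= i) q_j / p_j (indices mod m), the
   function h(x) = s(x + m) / s(2m) is harmonic for the walk inside the strip, with
   h(-m) = 0 and h(m) = 1; hence h(0) - E_0[h(S_n); tau > n] = P_0(tau <= n, S_tau = m).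
   From any point of the strip the walk leaves it upwards within 2m steps with
   probability at least P^(2m), so P_0(tau > n) decays geometrically and the series
   converges to h(0). Periodicity of the ratios gives s(2m) = s(m) (1 + Q / P), whence
   h(0) = P / (P + Q). *)

From HB Require Import structures.
From mathcomp Require Import all_boot all_order all_algebra.
From mathcomp Require Import all_classical all_reals all_analysis.
From mathcomp Require Import zify ring lra.
Import Order.TTheory GRing.Theory Num.Theory numFieldNormedType.Exports.
Local Open Scope ring_scope.
Local Open Scope classical_set_scope.
Set Implicit Arguments. Unset Strict Implicit. Unset Printing Implicit Defensive.

Definition ffun_rcons (T : Type) n (s : {ffun 'I_n -> T}) (a : T) : {ffun 'I_n.+1 -> T} :=
  [ffun k => if unlift ord_max k is Some k' then s k' else a].

Section FfunRcons.
Variables (T : Type) (n : nat).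
Implicit Types (s : {ffun 'I_n -> T}) (a : T).

Lemma ffun_rcons_widen s a (k : 'I_n) : ffun_rcons s a (widen_ord (leqnSn n) k) = s k.
Proof.
have -> : widen_ord (leqnSn n) k = lift ord_max k.
  by apply: val_inj; rewrite /= /bump leqNgt ltn_ord.
by rewrite ffunE liftK.
Qed.

Lemma ffun_rcons_max s a : ffun_rcons s a ord_max = a.
Proof. by rewrite ffunE unlift_none. Qed.

Lemma bij_ffun_rcons :
  bijective (fun sa : {ffun 'I_n -> T} * T => ffun_rcons sa.1 sa.2).
Proof.
exists (fun s' : {ffun 'I_n.+1 -> T} =>
          ([ffun k => s' (widen_ord (leqnSn n) k)], s' ord_max)).
  move=> [s a] /=; rewrite ffun_rcons_max; congr (_, _).
  by apply/ffunP => k; rewrite ffunE ffun_rcons_widen.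
move=> s' /=; apply/ffunP => k; rewrite ffunE.
case: unliftP => [j ->|->] //; rewrite ffunE.
by congr (s' _); apply: val_inj; rewrite /= /bump leqNgt ltn_ord.
Qed.

End FfunRcons.

Definition in_strip (m : nat) (x : int) : bool := `|x| < m%:Z.

Definition inside_before (m n : nat) (s : {ffun 'I_n -> 'I_3}) : bool :=
  [forall k : 'I_n, in_strip m (walk_pos s k)].

Section WalkRcons.
Variables (n : nat) (s : {ffun 'I_n -> 'I_3}) (a : 'I_3).

Lemma walk_pos_rcons k : (k <= n)%N -> walk_pos (ffun_rcons s a) k = walk_pos s k.
Proof.
move=> le_kn; rewrite /walk_pos big_mkcond big_ord_recr /= [RHS]big_mkcond.
rewrite ltnNge le_kn addr0; apply: eq_bigr => i _.
by rewrite ffun_rcons_widen.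
Qed.

Lemma walk_pos_rcons_last : walk_pos (ffun_rcons s a) n.+1 = walk_pos s n + step a.
Proof.
rewrite /walk_pos big_mkcond big_ord_recr /= [in RHS]big_mkcond ltnSn ffun_rcons_max.
by congr (_ + _); apply: eq_bigr => i _; rewrite ffun_rcons_widen ltn_ord ltnS ltnW.
Qed.

Lemma inside_before_rcons m :
  inside_before m (ffun_rcons s a) = inside_before m s && in_strip m (walk_pos s n).
Proof.
apply/forallP/andP => [inside|[/forallP inside_s strip_n] k].
  split; last by have := inside ord_max; rewrite walk_pos_rcons.
  apply/forallP => k; have := inside (widen_ord (leqnSn n) k).
  by rewrite /= walk_pos_rcons // ltnW.
have le_kn : (k <= n)%N by rewrite -ltnS.
rewrite walk_pos_rcons //; have [lt_kn|le_nk] := ltnP k n.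
  exact: (inside_s (Ordinal lt_kn)).
by have -> : k = n :> nat by apply/eqP; rewrite eqn_leq le_kn le_nk.
Qed.

Lemma path_weight_rcons (R : comNzRingType) m (p q : nat -> R) :
  path_weight m p q (ffun_rcons s a) = path_weight m p q s * trans m p q (walk_pos s n) a.
Proof.
rewrite /path_weight big_ord_recr /= ffun_rcons_max walk_pos_rcons //.
by congr (_ * _); apply: eq_bigr => i _; rewrite ffun_rcons_widen walk_pos_rcons // ltnW.
Qed.

End WalkRcons.

Section KilledWalk.
Variables (R : comNzRingType) (m : nat) (p q : nat -> R).

Definition killed_mean n (g : int -> R) : R :=
  \sum_(s : {ffun 'I_n -> 'I_3})
    (inside_before m s)%:R * path_weight m p q s * g (walk_pos s n).

Definition killed_step (g : int -> R) (x : int) : R :=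
  if in_strip m x then \sum_(i : 'I_3) trans m p q x i * g (x + step i) else 0.

Lemma killed_mean0 g : killed_mean 0 g = g 0.
Proof.
rewrite /killed_mean (big_pred1 [ffun=> ord0]); last first.
  by move=> s; apply/esym/eqP/ffunP => -[].
rewrite /inside_before /path_weight /walk_pos big_ord0 big1 => [|[]//].
by rewrite (_ : [forall _, _] = true) ?mul1r //; apply/forallP => -[].
Qed.

Lemma killed_meanS n g : killed_mean n.+1 g = killed_mean n (killed_step g).
Proof.
rewrite /killed_mean (reindex _ (onW_bij _ (bij_ffun_rcons _ _))) /=.
rewrite -(pair_big xpredT xpredT (fun s a => (inside_before m (ffun_rcons s a))%:R *
  path_weight m p q (ffun_rcons s a) * g (walk_pos (ffun_rcons s a) n.+1))) /=.
apply: eq_bigr => s _; rewrite /killed_step.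
under eq_bigr do rewrite inside_before_rcons path_weight_rcons walk_pos_rcons_last.
case: (inside_before m s); last by rewrite !mul0r big1 // => a _; rewrite !mul0r.
case: in_strip; last by rewrite mulr0 big1 // => a _; rewrite !mul0r.
by rewrite mul1r mulr_sumr; apply: eq_bigr => a _; rewrite mul1r !mulrA.
Qed.

Lemma killed_mean_iter n k g :
  killed_mean (n + k) g = killed_mean n (iter k killed_step g).
Proof. by elim: k g => [|k IHk] g; rewrite ?addn0 // addnS killed_meanS IHk iterSr. Qed.

Lemma killed_meanD n g1 g2 :
  killed_mean n (fun x => g1 x + g2 x) = killed_mean n g1 + killed_mean n g2.
Proof. by rewrite /killed_mean -big_split; apply: eq_bigr => s _; rewrite mulrDr. Qed.

Lemma killed_meanZ n c g : killed_mean n (fun x => c * g x) = c * killed_mean n g.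
Proof. by rewrite /killed_mean mulr_sumr; apply: eq_bigr => s _; rewrite mulrCA. Qed.

Lemma hit_up_atE n : hit_up_at m p q n = killed_mean n (fun x => (x == m%:Z)%:R).
Proof.
rewrite /hit_up_at /killed_mean big_mkcond; apply: eq_bigr => s _.
rewrite /first_hit_up /inside_before /in_strip; case: [forall _, _]; last by rewrite !mul0r.
by case: (_ == _); rewrite ?mul1r ?mulr1 ?mulr0.
Qed.

Lemma sum_trans x : \sum_(i < 3) trans m p q x i = 1.
Proof. by rewrite !big_ord_recr big_ord0 /= /trans /=; ring. Qed.

End KilledWalk.

Lemma absz_modz_ltn (m : nat) (x : int) : (0 < m)%N -> (absz (x %% m%:Z)%Z < m)%N.
Proof.
move=> m_gt0; have m_neq0 : m%:Z != 0 by rewrite eqz_nat -lt0n.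
have := modz_ge0 x m_neq0; have := ltz_pmod x (m_gt0 : 0 < m%:Z); lia.
Qed.

Section Survival.
Variables (R : realDomainType) (m : nat) (p q : nat -> R).
Hypotheses (m_gt0 : (0 < m)%N) (p_ge0 : forall i, (i < m)%N -> 0 <= p i)
  (q_ge0 : forall i, (i < m)%N -> 0 <= q i) (pq_le1 : forall i, (i < m)%N -> p i + q i <= 1).

Local Notation idx x := (absz (x %% m%:Z)%Z).
Local Notation P := (\prod_(i < m) p i).

Definition strip_ind (x : int) : R := (in_strip m x)%:R.

Lemma strip_ind_le1 x : strip_ind x <= 1.
Proof. by rewrite /strip_ind; case: in_strip; rewrite ?ler01. Qed.

Lemma trans_ge0 x i : 0 <= trans m p q x i.
Proof.
have idx_lt := absz_modz_ltn x m_gt0.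
have := p_ge0 idx_lt; have := q_ge0 idx_lt; have := pq_le1 idx_lt.
rewrite /trans; case: ifP => // _; case: ifP => // _; lra.
Qed.

Lemma ler_killed_mean n g1 g2 :
  (forall x, g1 x <= g2 x) -> killed_mean m p q n g1 <= killed_mean m p q n g2.
Proof.
move=> le_g; apply: ler_sum => s _; apply: ler_wpM2l => //.
by rewrite mulr_ge0 ?ler0n ?prodr_ge0 // => k _; apply: trans_ge0.
Qed.

Lemma killed_mean_ge0 n g : (forall x, 0 <= g x) -> 0 <= killed_mean m p q n g.
Proof.
move=> g_ge0; apply: le_trans (ler_killed_mean n g_ge0).
by rewrite /killed_mean big1 // => s _; rewrite mulr0.
Qed.

Lemma killed_step_bounded g :
  (forall y, 0 <= g y <= 1) -> forall x, 0 <= killed_step m p q g x <= strip_ind x.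
Proof.
move=> g01 x; rewrite /killed_step /strip_ind; case: in_strip; rewrite ?lexx //=.
rewrite -(sum_trans m p q x) sumr_ge0 ?ler_sum // => i _.
  all: have /andP[g0 g1] := g01 (x + step i).
  by rewrite ler_piMr ?trans_ge0.
by rewrite mulr_ge0 ?trans_ge0.
Qed.

Lemma iter_killed_step_bounded j x :
  0 <= iter j (killed_step m p q) strip_ind x <= strip_ind x.
Proof.
elim: j x => [|j IHj] x /=; first by rewrite lexx andbT /strip_ind ler0n.
apply: killed_step_bounded => y; have /andP[-> /le_trans->//] := IHj y.
exact: strip_ind_le1.
Qed.

Lemma killed_step_le_up g x : (forall y, 0 <= g y <= 1) -> in_strip m x ->
  killed_step m p q g x <= 1 - p (idx x) * (1 - g (x + 1)).
Proof.
move=> g01 strip_x; rewrite /killed_step strip_x !big_ord_recr big_ord0 /= add0r /trans /=.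
have idx_lt := absz_modz_ltn x m_gt0.
have := p_ge0 idx_lt; have := q_ge0 idx_lt; have := pq_le1 idx_lt.
rewrite /step /=; have := g01 (x - 1); have := g01 (x + 0); have := g01 (x + 1).
move=> /andP[? ?] /andP[? ?] /andP[? ?] *; nra.
Qed.

Lemma prod_p_le j : (j < m)%N -> P <= p j.
Proof.
move=> lt_jm; rewrite (bigD1 (Ordinal lt_jm)) //= ler_piMr ?p_ge0 //.
apply: prodr_ile1 => i _; have := p_ge0 (ltn_ord i); have := q_ge0 (ltn_ord i).
have := pq_le1 (ltn_ord i); move=> *; apply/andP; split => //; lra.
Qed.

Lemma prod_p_ge0 : 0 <= P.
Proof. by apply: prodr_ge0 => i _; apply: p_ge0. Qed.

Lemma prod_p_le1 : P <= 1.
Proof.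
apply: le_trans (prod_p_le m_gt0) _; have := q_ge0 m_gt0; have := pq_le1 m_gt0; lra.
Qed.

(* From [x], the [m - x <= j] successive up-steps that leave the strip each have
   probability at least [P]. *)
Lemma iter_killed_step_le j x : in_strip m x -> m%:Z - x <= j%:Z ->
  iter j (killed_step m p q) strip_ind x <= 1 - P ^+ j.
Proof.
elim: j x => [|j IHj] x strip_x le_j; first by move: strip_x; rewrite /in_strip; lia.
have up_le : iter j (killed_step m p q) strip_ind (x + 1) <= 1 - P ^+ j.
  have [strip_up|out_up] := boolP (in_strip m (x + 1)); first by apply: IHj => //; lia.
  have /andP[_] := iter_killed_step_bounded j (x + 1).
  rewrite /strip_ind (negbTE out_up) => /le_trans->//.
  by rewrite subr_ge0 exprn_ile1 ?prod_p_ge0 ?prod_p_le1.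
have iter01 y : 0 <= iter j (killed_step m p q) strip_ind y <= 1.
  by have /andP[-> /le_trans->//] := iter_killed_step_bounded j y; apply: strip_ind_le1.
rewrite iterS (le_trans (killed_step_le_up iter01 strip_x)) //.
have idx_lt := absz_modz_ltn x m_gt0; have Pj_ge0 := exprn_ge0 j prod_p_ge0.
have : P * P ^+ j <= p (idx x) * P ^+ j by rewrite ler_wpM2r ?prod_p_le.
have : p (idx x) * P ^+ j <= p (idx x) * (1 - iter j (killed_step m p q) strip_ind (x + 1)).
  by rewrite ler_wpM2l ?p_ge0 // lerBrDr -lerBrDl.
rewrite exprS; lra.
Qed.

Definition survival n := killed_mean m p q n strip_ind.

Lemma le_survival : {homo survival : n k / (n <= k)%N >-> k <= n}.
Proof.
apply/nonincreasing_seqP => n.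
have ind01 y : 0 <= strip_ind y <= 1 by rewrite ler0n strip_ind_le1.
rewrite /survival killed_meanS; apply: ler_killed_mean => x.
by have /andP[] := killed_step_bounded ind01 x.
Qed.

Lemma survival_le_expr n : survival n <= (1 - P ^+ (2 * m)) ^+ (n %/ (2 * m)).
Proof.
have step_le x :
    iter (2 * m) (killed_step m p q) strip_ind x <= (1 - P ^+ (2 * m)) * strip_ind x.
  have [strip_x|out_x] := boolP (in_strip m x).
    rewrite /strip_ind strip_x mulr1 iter_killed_step_le //.
    by move: strip_x; rewrite /in_strip; lia.
  have /andP[_] := iter_killed_step_bounded (2 * m) x.
  by rewrite /strip_ind (negbTE out_x) mulr0.
apply: le_trans (le_survival (leq_divM n (2 * m))) _.
elim: (n %/ (2 * m))%N => [|k IHk]; first by rewrite /survival killed_mean0 strip_ind_le1.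
rewrite mulSn addnC /survival killed_mean_iter.
apply: le_trans (ler_killed_mean _ step_le) _; rewrite killed_meanZ exprS ler_wpM2l //.
by rewrite subr_ge0 exprn_ile1 ?prod_p_ge0 ?prod_p_le1.
Qed.

End Survival.

Lemma absz_modz_subn (m k : nat) : absz ((k%:Z - m%:Z) %% m%:Z)%Z = (k %% m)%N.
Proof.
by rewrite (_ : k%:Z - m%:Z = (-1) * m%:Z + k%:Z) ?modzMDl ?modz_nat //; ring.
Qed.

Section ScaleFunction.
Variables (R : realFieldType) (m : nat) (p q : nat -> R).
Hypotheses (m_gt0 : (0 < m)%N) (p_gt0 : forall i, (i < m)%N -> 0 < p i)
  (q_gt0 : forall i, (i < m)%N -> 0 < q i).

Local Notation P := (\prod_(i < m) p i).
Local Notation Q := (\prod_(i < m) q i).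

Definition ratio k : R := q (k %% m)%N / p (k %% m)%N.

Definition ratio_prod k : R := \prod_(1 <= i < k.+1) ratio i.

Definition scale_fun k : R := \sum_(0 <= i < k) ratio_prod i.

Definition hit_prob (x : int) : R :=
  if in_strip m x then scale_fun (absz (x + m%:Z)) / scale_fun (2 * m) else 0.

Lemma ratio_gt0 k : 0 < ratio k.
Proof. by have lt_km := ltn_pmod k m_gt0; rewrite divr_gt0 ?p_gt0 ?q_gt0. Qed.

Lemma ratio_prod_gt0 k : 0 < ratio_prod k.
Proof. by apply: prodr_gt0 => i _; apply: ratio_gt0. Qed.

Lemma ratio_prodS k : ratio_prod k.+1 = ratio_prod k * ratio k.+1.
Proof. by rewrite /ratio_prod big_nat_recr. Qed.

Lemma scale_funS k : scale_fun k.+1 = scale_fun k + ratio_prod k.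
Proof. by rewrite /scale_fun big_nat_recr. Qed.

Lemma scale_fun_ge0 k : 0 <= scale_fun k.
Proof. by apply: sumr_ge0 => i _; apply/ltW/ratio_prod_gt0. Qed.

Lemma le_scale_fun : {homo scale_fun : k l / (k <= l)%N >-> k <= l}.
Proof.
by apply/nondecreasing_seqP => k; rewrite scale_funS lerDl ltW ?ratio_prod_gt0.
Qed.

Lemma scale_fun_gt0 k : (0 < k)%N -> 0 < scale_fun k.
Proof.
move=> k_gt0; apply: lt_le_trans (le_scale_fun k_gt0).
by rewrite scale_funS /scale_fun big_geq // add0r ratio_prod_gt0.
Qed.

Lemma prod_ratio_period k : \prod_(k <= i < k + m) ratio i = Q / P.
Proof.
elim: k => [|k IHk].
  rewrite add0n big_mkord -prodf_div; apply: eq_bigr => i _.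
  by rewrite /ratio modn_small.
have lt_k_km : (k < k + m)%N by rewrite -[X in (X < _)%N]addn0 ltn_add2l.
by rewrite -IHk addSn big_nat_recr // (big_ltn lt_k_km) mulrC /ratio modnDr.
Qed.

Lemma ratio_prod_addm k : ratio_prod (k + m) = ratio_prod k * (Q / P).
Proof.
by rewrite /ratio_prod -addSn (@big_cat_nat _ _ _ k.+1) ?leq_addr // prod_ratio_period.
Qed.

Lemma scale_fun_double : scale_fun (2 * m) = scale_fun m * (1 + Q / P).
Proof.
rewrite /scale_fun (@big_cat_nat _ _ _ m) ?leq_pmull //= (big_addn 0 _ m).
rewrite (_ : (2 * m - m = m)%N); last by rewrite mul2n -addnn addnK.
rewrite mulrDr mulr1 mulr_suml; congr (_ + _).
by apply: eq_bigr => i _; rewrite ratio_prod_addm.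
Qed.

Lemma hit_prob0 : hit_prob 0 = P / (P + Q).
Proof.
have P_gt0 : 0 < P by apply: prodr_gt0 => i _; apply: p_gt0.
have Q_gt0 : 0 < Q by apply: prodr_gt0 => i _; apply: q_gt0.
have scale_m_gt0 := scale_fun_gt0 m_gt0.
rewrite /hit_prob /in_strip normr0 ltz_nat m_gt0 add0r absz_nat scale_fun_double.
by field; rewrite !gt_eqF ?addr_gt0.
Qed.

Lemma hit_prob_bounded x : 0 <= hit_prob x <= strip_ind R m x.
Proof.
rewrite /hit_prob /strip_ind; case: ifP => strip_x; rewrite ?lexx //=.
have scale_2m_gt0 : 0 < scale_fun (2 * m) by rewrite scale_fun_gt0 ?muln_gt0.
rewrite divr_ge0 ?scale_fun_ge0 ?ler_pdivrMr ?mul1r ?le_scale_fun //.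
by move: strip_x; rewrite /in_strip; lia.
Qed.

Lemma hit_prob_add_top k y : (k <= 2 * m)%N -> y = k%:Z - m%:Z ->
  hit_prob y + (y == m%:Z)%:R = scale_fun k / scale_fun (2 * m).
Proof.
move=> le_k2m ->; rewrite /hit_prob /in_strip.
have [strip|out] := boolP (`|k%:Z - m%:Z| < m%:Z).
  rewrite subrK absz_nat (_ : (k%:Z - m%:Z == m%:Z) = false) ?addr0 //.
  by apply/negbTE/eqP; move: strip; lia.
rewrite add0r.
have [->|->] : k = 0%N \/ k = (2 * m)%N by move: out; lia.
  have /negbTE-> : 0%:Z - m%:Z != m%:Z by apply/eqP; lia.
  by rewrite /scale_fun big_geq ?mul0r.
have /eqP-> : (2 * m)%N%:Z - m%:Z == m%:Z by apply/eqP; lia.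
by rewrite eqxx divff // gt_eqF ?scale_fun_gt0 ?muln_gt0.
Qed.

(* Harmonicity reduces to [p w_(j+1) = q w_j] for [w = ratio_prod], the recursion
   that defines [ratio_prod]. *)
Lemma killed_step_hit_prob x :
  killed_step m p q (fun y => hit_prob y + (y == m%:Z)%:R) x = hit_prob x.
Proof.
rewrite /killed_step; case: ifP => strip_x; last by rewrite /hit_prob strip_x.
have [j [def_x le_j2m]] : exists j, x = j.+1%:Z - m%:Z /\ (j.+2 <= 2 * m)%N.
  by exists (absz (x + m%:Z)).-1; move: strip_x; rewrite /in_strip; lia.
rewrite !big_ord_recr big_ord0 /= add0r /trans /step /=.
rewrite (hit_prob_add_top (k := j)); try lia.
rewrite (hit_prob_add_top (k := j.+1)); try lia.
rewrite (hit_prob_add_top (k := j.+2)); try lia.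
rewrite /hit_prob strip_x def_x subrK absz_nat absz_modz_subn !scale_funS ratio_prodS /ratio.
have lt_jm := ltn_pmod j.+1 m_gt0.
by field; rewrite !gt_eqF ?p_gt0 ?scale_fun_gt0 ?muln_gt0.
Qed.

Lemma killed_mean_hit_prob n :
  killed_mean m p q n hit_prob = killed_mean m p q n.+1 hit_prob + hit_up_at m p q n.+1.
Proof.
rewrite hit_up_atE -killed_meanD killed_meanS.
by apply: eq_bigr => s _; rewrite killed_step_hit_prob.
Qed.

Lemma hit_series n : series (hit_up_at m p q) n.+1 = hit_prob 0 - killed_mean m p q n hit_prob.
Proof.
elim: n => [|n IHn].
  rewrite /series /= big_nat1 hit_up_atE !killed_mean0 subrr.
  by have /negbTE-> : 0 != m%:Z :> int by rewrite eq_sym eqz_nat -lt0n.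
rewrite /series /= big_nat_recr //=; move: IHn; rewrite /series /= => ->.
by rewrite killed_mean_hit_prob; ring.
Qed.

End ScaleFunction.

Lemma cvg_divnr d : (0 < d)%N -> (fun n => (n %/ d)%N) @ \oo --> \oo.
Proof.
by move=> d_gt0 A [N _ AN]; exists (N * d)%N => // n; rewrite /= -leq_divRL // => /AN.
Qed.

Lemma cvg_le_expr_divn (R : archiRealFieldType) (u : R ^nat) (c : R) (d : nat) :
  (0 < d)%N -> 0 <= c < 1 -> (forall n, 0 <= u n <= c ^+ (n %/ d)) -> u @ \oo --> 0.
Proof.
move=> d_gt0 /andP[c_ge0 c_lt1] u_bound.
apply: (@squeeze_cvgr _ _ _ _ (cst 0) (fun n => c ^+ (n %/ d))); first exact: nearW.
  exact: cvg_cst.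
by apply: cvg_comp (cvg_divnr d_gt0) (cvg_expr _); rewrite ger0_norm.
Qed.

Section HitSeries.
Variables (R : archiRealFieldType) (m : nat) (p q : nat -> R).
Hypotheses (m_gt0 : (0 < m)%N) (p_gt0 : forall i, (i < m)%N -> 0 < p i)
  (q_gt0 : forall i, (i < m)%N -> 0 < q i) (pq_le1 : forall i, (i < m)%N -> p i + q i <= 1).

Local Notation P := (\prod_(i < m) p i).
Local Notation Q := (\prod_(i < m) q i).

Let p_ge0 i (lt_im : (i < m)%N) : 0 <= p i := ltW (p_gt0 lt_im).
Let q_ge0 i (lt_im : (i < m)%N) : 0 <= q i := ltW (q_gt0 lt_im).

Lemma killed_mean_hit_prob_decay n :
  0 <= killed_mean m p q n (hit_prob m p q) <= (1 - P ^+ (2 * m)) ^+ (n %/ (2 * m)).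
Proof.
have hit01 x := hit_prob_bounded m_gt0 p_gt0 q_gt0 x.
apply/andP; split; first by apply: killed_mean_ge0 => // x; case/andP: (hit01 x).
apply: le_trans (survival_le_expr m_gt0 p_ge0 q_ge0 pq_le1 n).
by apply: ler_killed_mean => // x; case/andP: (hit01 x).
Qed.

Lemma hit_series_cvg : series (hit_up_at m p q) @ \oo --> P / (P + Q).
Proof.
have P_gt0 : 0 < P by apply: prodr_gt0 => i _; apply: p_gt0.
have contraction : 0 <= 1 - P ^+ (2 * m) < 1.
  rewrite subr_ge0 ltrBlDr ltrDl exprn_gt0 // andbT exprn_ile1 ?(ltW P_gt0) //.
  exact: prod_p_le1 m_gt0 p_ge0 q_ge0 pq_le1.
have two_m_gt0 : (0 < 2 * m)%N by rewrite muln_gt0.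
have decay := cvg_le_expr_divn two_m_gt0 contraction killed_mean_hit_prob_decay.
rewrite -(hit_prob0 m_gt0 p_gt0 q_gt0) -cvg_shiftS.
rewrite (_ : [sequence _]_n =
    fun n => hit_prob m p q 0 - killed_mean m p q n (hit_prob m p q)).
  by rewrite -{2}[hit_prob m p q 0]subr0; apply: cvgB decay; apply: cvg_cst.
by apply/funext => n; rewrite /= hit_series.
Qed.

End HitSeries.

Unset Implicit Arguments.
Set Strict Implicit.

(* p^*_m = sum_n P_0(tau = n, S_tau = m), tau the hitting time of {-m, m}. *)
Theorem lemma3p2 (R : realType) (m : nat) (p q : nat -> R) :
  (1 <= m)%N ->
  (forall i, (i < m)%N -> 0 <= p i) ->
  (forall i, (i < m)%N -> 0 <= q i) ->
  (forall i, (i < m)%N -> p i + q i <= 1) ->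
  (forall i, (i < m)%N -> p i * q i != 0) ->
  let P := \prod_(i < m) p i in
  let Q := \prod_(i < m) q i in
  let rho := P / Q in
  (series (hit_up_at m p q) @ \oo --> (P / (P + Q) : R^o))
  /\ P / (P + Q) = rho / (1 + rho).
Proof.
move=> m_gt0 p_ge0 q_ge0 pq_le1 pq_neq0 P Q rho.
have pq_gt0 i : (i < m)%N -> 0 < p i /\ 0 < q i.
  move=> lt_im; have := pq_neq0 i lt_im; rewrite mulf_eq0 negb_or => /andP[p_neq0 q_neq0].
  by rewrite !lt_def p_neq0 q_neq0 p_ge0 ?q_ge0.
have p_gt0 i (lt_im : (i < m)%N) := proj1 (pq_gt0 i lt_im).
have q_gt0 i (lt_im : (i < m)%N) := proj2 (pq_gt0 i lt_im).
split; first exact: hit_series_cvg.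
have P_gt0 : 0 < P by apply: prodr_gt0 => i _; apply: p_gt0.
have Q_gt0 : 0 < Q by apply: prodr_gt0 => i _; apply: q_gt0.
by rewrite /rho; field; rewrite !gt_eqF ?addr_gt0 ?divr_gt0.
Qed.
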